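(* Let $F$ be a field of characteristic zero. Every derivation of the Lie algebra $W^*(1,0)$ can be written as a sum of an inner derivation and a scalar derivation.
   Context: $W^*(1,0)$ is the Lie algebra over $F$ with basis $\{e^{ax}x^i\partial: a\in\mathbb Z, i\in\mathbb N\}$ ($\mathbb N$ the nonnegative integers), viewed as vector fields $f\partial$ with $f$ in the $F$-algebra $F[e^{\pm x},x]$ (basis $e^{ax}x^i$, multiplication adding exponents, $\partial(e^{ax}x^i)=ae^{ax}x^i+ie^{ax}x^{i-1}$), with bracket $[f\partial,g\partial]=(f\partial(g)-g\partial(f))\partial$. A derivation of a Lie algebra $L$ is a linear map $D:L\to L$ with $D([l_1,l_2])=[D(l_1),l_2]+[l_1,D(l_2)]$. A derivation $D$ is a scalar derivation if for every basis element $l$ (here $l=e^{ax}x^i\partial$) one has $D(l)=f_l\,l$ for some scalar $f_l\in F$ depending on $l$. *)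

(* with multinomials' monoid algebra {malg F[K]} used as the
   space of finitely supported F-valued functions on K = Z x N. *)
From HB Require Import structures.
From mathcomp Require Import all_boot all_order all_algebra.
From mathcomp Require Import finmap monalg.
Set Implicit Arguments. Unset Strict Implicit. Unset Printing Implicit Defensive.
Import Order.TTheory GRing.Theory Num.Theory.
Local Open Scope ring_scope.

(* Index set of the basis: e^{ax} x^i  <->  (a, i), a : int, i : nat. *)
Definition W_index := (int * nat)%type.

(* F[e^{+-x}, x] as an F-vector space with basis e^{ax}x^i; the Lie algebra
   W^*(1,0) = { f d : f in F[e^{+-x},x] } is identified with it via f d <-> f. *)
Definition Wstar (F : fieldType) := {malg F[W_index]}.

Definition ebasis (F : fieldType) (a : int) (i : nat) : Wstar F := << (a, i) >>.

(* Multiplication of F[e^{+-x},x]: e^{ax}x^i * e^{bx}x^j = e^{(a+b)x}x^{i+j},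
   extended bilinearly. *)
Definition Wmul (F : fieldType) (f g : Wstar F) : Wstar F :=
  \sum_(k <- msupp f) \sum_(l <- msupp g)
     (f@_k * g@_l) *: (<< (k.1 + l.1, (k.2 + l.2)%N) >> : Wstar F).

(* d(e^{ax}x^i) = a e^{ax}x^i + i e^{ax}x^{i-1}, extended linearly
   (for i = 0 the second term has coefficient 0). *)
Definition Wder (F : fieldType) (f : Wstar F) : Wstar F :=
  \sum_(k <- msupp f)
     f@_k *: ((k.1)%:~R *: (<< k >> : Wstar F)
              + (k.2)%:R *: (<< (k.1, (k.2).-1) >> : Wstar F)).

(* Lie bracket [f d, g d] = (f d(g) - g d(f)) d. *)
Definition Wbracket (F : fieldType) (f g : Wstar F) : Wstar F :=
  Wmul f (Wder g) - Wmul g (Wder f).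

Definition is_linear_map (F : fieldType) (D : Wstar F -> Wstar F) : Prop :=
  forall (c : F) (x y : Wstar F), D (c *: x + y) = c *: D x + D y.

Definition is_derivation (F : fieldType) (D : Wstar F -> Wstar F) : Prop :=
  is_linear_map D /\
  forall x y : Wstar F, D (Wbracket x y) = Wbracket (D x) y + Wbracket x (D y).

Definition ad (F : fieldType) (u : Wstar F) : Wstar F -> Wstar F :=
  fun x => Wbracket u x.

Definition is_scalar_derivation (F : fieldType) (D : Wstar F -> Wstar F) : Prop :=
  is_derivation D /\
  forall (a : int) (i : nat), exists c : F, D (ebasis F a i) = c *: ebasis F a i.

From HB Require Import structures.
From mathcomp Require Import all_boot all_order all_algebra.
From mathcomp Require Import finmap monalg.
From mathcomp Require Import ring zify.
Import GRing.Theory.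
Local Open Scope ring_scope.
Set Implicit Arguments. Unset Strict Implicit.

(* W^*(1,0) is the Lie algebra attached to the commutative algebra
   A = F[e^{+-x}, x] and its derivation d by [f, g] = f d(g) - g d(f).
   In characteristic zero d is onto and the kernel of d - a is F e^{ax}.
   Since ad 1 = d, subtracting from a derivation D the inner derivation ad u
   with d(u) = -D(1) makes it vanish at 1, hence commute with d; then its
   value at x lies in ker d = F, and subtracting ad c kills x as well.
   A derivation S vanishing at 1 and x commutes with d and with ad x.  The
   first property makes e^{ax} an eigenvector of S, and the relation
   [x, e^{ax} x^i] = a e^{ax} x^{i+1} + (i - 1) e^{ax} x^i propagates the
   eigenvalue along i when a <> 0; for a = 0 the same two facts force
   S(x^i) = 0. *)

Section DerivationBracket.
Variables (R : comNzRingType) (A : comAlgType R) (d : {linear A -> A}).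
Hypothesis d_Leibniz : forall x y, d (x * y) = d x * y + x * d y.

Definition der_bracket (x y : A) : A := x * d y - y * d x.

Definition lie_derivation (D : A -> A) : Prop :=
  linear D /\
  forall x y, D (der_bracket x y) = der_bracket (D x) y + der_bracket x (D y).

Lemma der_bracket_linear_r u : linear (der_bracket u).
Proof.
move=> c x y; rewrite /der_bracket linearPZ mulrDr mulrDl -scalerAr -scalerAl.
by rewrite scalerBr; ring.
Qed.

Lemma der_bracket_linear_l v : linear (der_bracket^~ v).
Proof.
move=> c x y; rewrite /der_bracket linearPZ mulrDr mulrDl -scalerAr -scalerAl.
by rewrite scalerBr; ring.
Qed.

Lemma der_bracketZ u c y : der_bracket u (c *: y) = c *: der_bracket u y.
Proof. exact: (GRing.semilinear_linear (der_bracket_linear_r u)).1. Qed.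

Lemma der_bracket_jacobi u x y :
  der_bracket u (der_bracket x y)
  = der_bracket (der_bracket u x) y + der_bracket x (der_bracket u y).
Proof. by rewrite /der_bracket !linearB !d_Leibniz; ring. Qed.

Lemma der1 : d 1 = 0.
Proof.
have d11 := d_Leibniz 1 1; rewrite !mulr1 mul1r in d11.
by apply: (addrI (d 1)); rewrite addr0 -d11.
Qed.

Lemma der_bracket0l y : der_bracket 0 y = 0.
Proof. by rewrite /der_bracket linear0 mul0r mulr0 subrr. Qed.

Lemma der_bracket1l y : der_bracket 1 y = d y.
Proof. by rewrite /der_bracket der1 mul1r mulr0 subr0. Qed.

Lemma der_bracket1r y : der_bracket y 1 = - d y.
Proof. by rewrite /der_bracket der1 mul1r mulr0 sub0r. Qed.

Lemma lie_derivation_ad u : lie_derivation (der_bracket u).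
Proof. by split; [exact: der_bracket_linear_r | exact: der_bracket_jacobi]. Qed.

Lemma lie_derivationB D1 D2 :
  lie_derivation D1 -> lie_derivation D2 -> lie_derivation (D1 \- D2).
Proof.
move=> [D1_lin D1_der] [D2_lin D2_der]; split=> [c x y|x y] /=.
  by rewrite D1_lin D2_lin scalerBr addrACA opprD.
by rewrite D1_der D2_der /der_bracket !linearB; ring.
Qed.
End DerivationBracket.

Section Char0.
Variables (F : fieldType) (charF0 : [pchar F] =i pred0).

Lemma pchar0_natrS_neq0 n : n.+1%:R != 0 :> F.
Proof. by rewrite (pcharf0P _).1. Qed.

Lemma pchar0_intr_eq0 (a : int) : (a%:~R == 0 :> F) = (a == 0).
Proof.
case: a => n; first by rewrite (pcharf0P _).1.
by rewrite NegzE mulrNz oppr_eq0 (pcharf0P _).1.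
Qed.
End Char0.

(* [m a i] plays the role of e^{ax} x^i; the hypotheses below are all that
   the argument uses about F[e^{+-x}, x] and its derivation. *)
Section WittTypeAlgebra.
Variables (F : fieldType) (A : comAlgType F) (d : {linear A -> A}).
Variable m : int -> nat -> A.
Hypotheses (m00 : m 0 0 = 1)
  (m_mul : forall a i b j, m a i * m b j = m (a + b) (i + j))
  (d_m : forall a i, d (m a i) = a%:~R *: m a i + i%:R *: m a i.-1)
  (m_ind : forall P : A -> Prop,
     P 0 -> (forall c a i x, P x -> P (c *: m a i + x)) -> forall x, P x).

Lemma derM_mm a i b j :
  d (m a i * m b j) = d (m a i) * m b j + m a i * d (m b j).
Proof.
rewrite m_mul !d_m mulrDl mulrDr -!scalerAl -!scalerAr !m_mul.
have -> : i%:R *: m (a + b) (i.-1 + j) = i%:R *: m (a + b) (i + j).-1.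
  by case: i => [|i]; rewrite ?scale0r.
have -> : j%:R *: m (a + b) (i + j.-1) = j%:R *: m (a + b) (i + j).-1.
  by case: j => [|j]; rewrite ?scale0r // addnS.
by rewrite intrD natrD !scalerDl addrACA.
Qed.

Lemma derM_m a i y : d (m a i * y) = d (m a i) * y + m a i * d y.
Proof.
elim/m_ind: y => [|c b j y IHy]; first by rewrite !(mulr0, linear0) addr0.
have -> : m a i * (c *: m b j + y) = c *: (m a i * m b j) + m a i * y.
  by rewrite mulrDr scalerAr.
by rewrite !linearPZ derM_mm IHy !mulrDr scalerDr -!scalerAr addrACA.
Qed.

Lemma derM x y : d (x * y) = d x * y + x * d y.
Proof.
elim/m_ind: x => [|c a i x IHx]; first by rewrite !(mul0r, linear0) addr0.
have -> : (c *: m a i + x) * y = c *: (m a i * y) + x * y.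
  by rewrite mulrDl scalerAl.
by rewrite !linearPZ derM_m IHx !mulrDl scalerDr !scalerAl addrACA.
Qed.

Hypotheses (charF0 : [pchar F] =i pred0)
  (d_eigen : forall b z, d z = b%:~R *: z -> exists c, z = c *: m b 0).

Local Notation br := (der_bracket d).
Local Notation x := (m 0 1).

Lemma der_onto_m a i : exists u, d u = m a i.
Proof.
have [-> | a0] := eqVneq a 0.
  exists (i.+1%:R^-1 *: m 0 i.+1); rewrite linearZZ d_m /= scale0r add0r.
  by rewrite scalerA mulVf ?scale1r ?(pchar0_natrS_neq0 charF0).
have a0F : a%:~R != 0 :> F by rewrite (pchar0_intr_eq0 charF0).
elim: i => [|i [v dv]].
  exists (a%:~R^-1 *: m a 0).
  by rewrite linearZZ d_m scale0r addr0 scalerA mulVf ?scale1r.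
exists (a%:~R^-1 *: (m a i.+1 - i.+1%:R *: v)).
by rewrite linearZZ linearB linearZZ d_m dv /= addrK scalerA mulVf ?scale1r.
Qed.

Lemma der_onto g : exists u, d u = g.
Proof.
elim/m_ind: g => [|c a i g [u du]]; first by exists 0; rewrite linear0.
have [v dv] := der_onto_m a i.
by exists (c *: v + u); rewrite linearPZ dv du.
Qed.

Lemma der_x : d x = 1.
Proof. by rewrite d_m scale0r add0r scale1r m00. Qed.

Lemma x_mulm a i : x * m a i = m a i.+1.
Proof. by rewrite m_mul add0r add1n. Qed.

Lemma der_bracket_xm a i :
  br x (m a i) = a%:~R *: m a i.+1 + (i%:R - 1) *: m a i.
Proof.
rewrite /der_bracket der_x mulr1 d_m mulrDr -!scalerAr !x_mulm.
have -> : i%:R *: m a i.-1.+1 = i%:R *: m a i.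
  by case: i => [|i]; rewrite ?scale0r.
by rewrite scalerBl scale1r addrA.
Qed.

Lemma lie_derivation_der_comm S : lie_derivation d S -> S 1 = 0 ->
  forall y, S (d y) = d (S y).
Proof.
move=> [_ S_br] S1 y.
by rewrite -!(der_bracket1l derM) S_br S1 der_bracket0l add0r.
Qed.

Lemma lie_derivation_normalize D : lie_derivation d D ->
  exists u, (D \- br u) 1 = 0 /\ (D \- br u) x = 0.
Proof.
move=> Dder; have [u0 du0] := der_onto (- D 1).
have S0der := lie_derivationB Dder (lie_derivation_ad derM u0).
have S01 : D 1 - br u0 1 = 0 by rewrite (der_bracket1r derM) du0 opprK subrr.
have [c S0x] : exists c, D x - br u0 x = c *: m 0 0.
  apply: d_eigen.
  by rewrite -(lie_derivation_der_comm S0der S01) der_x /= S01 scale0r.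
exists (c *: 1 + u0).
have br_shift y : br (c *: 1 + u0) y = br u0 y + c *: d y.
  by rewrite der_bracket_linear_l (der_bracket1l derM) addrC.
split; rewrite /= br_shift opprD addrA.
  by rewrite S01 (der1 derM) scaler0 subr0.
by rewrite S0x der_x m00 subrr.
Qed.

Section ScalarDerivation.
Variable S : A -> A.
Hypotheses (S_der : lie_derivation d S) (S1 : S 1 = 0) (Sx : S x = 0).

Let SZ c v : S (c *: v) = c *: S v.
Proof. exact: (GRing.semilinear_linear S_der.1).1. Qed.

Let SD v w : S (v + w) = S v + S w.
Proof. exact: (GRing.semilinear_linear S_der.1).2. Qed.

Let S_der_comm := lie_derivation_der_comm S_der S1.

Lemma lie_derivation_bracket_x y : S (br x y) = br x (S y).
Proof. by rewrite S_der.2 Sx der_bracket0l add0r. Qed.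

(* S(x^{i+1}) is a constant k, being killed by d, and applying S to
   [x, x^{i+1}] = i x^{i+1} gives i k = [x, k] = -k. *)
Lemma lie_derivation_m0 i : S (m 0 i) = 0.
Proof.
elim: i => [|i IHi]; first by rewrite m00.
have [k Sk] : exists k, S (m 0 i.+1) = k *: m 0 0.
  by apply: d_eigen; rewrite -S_der_comm d_m /= SD !SZ IHi scaler0 addr0.
have : (i.+1%:R * k) *: (1 : A) = 0.
  have := lie_derivation_bracket_x (m 0 i.+1).
  rewrite der_bracket_xm scale0r add0r mulrSr addrK SZ Sk m00 der_bracketZ.
  rewrite (der_bracket1r derM) der_x => ik.
  by rewrite mulrDl mul1r scalerDl -scalerA ik scalerN addNr.
move/eqP; rewrite scaler_eq0 oner_eq0 orbF mulf_eq0.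
rewrite (negbTE (pchar0_natrS_neq0 charF0 i)).
by rewrite Sk => /eqP ->; rewrite scale0r.
Qed.

Lemma lie_derivation_eigen_m a :
  a != 0 -> exists c, forall i, S (m a i) = c *: m a i.
Proof.
move=> a0; have a0F : a%:~R != 0 :> F by rewrite (pchar0_intr_eq0 charF0).
have [c Sc] : exists c, S (m a 0) = c *: m a 0.
  by apply: d_eigen; rewrite -S_der_comm d_m scale0r addr0 SZ.
exists c; elim=> [|i IHi] //.
have := lie_derivation_bracket_x (m a i).
rewrite der_bracket_xm SD !SZ IHi der_bracketZ der_bracket_xm.
rewrite scalerDr (scalerA c (_ - 1)) (scalerA (_ - 1) c) mulrC => /addIr.
by rewrite scalerA mulrC -scalerA => /(scalerI a0F).
Qed.

Lemma lie_derivation_scalar a i : exists c, S (m a i) = c *: m a i.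
Proof.
have [-> | a0] := eqVneq a 0.
  by exists 0; rewrite lie_derivation_m0 scale0r.
by have [c Sc] := lie_derivation_eigen_m a0; exists c.
Qed.
End ScalarDerivation.

Theorem lie_derivation_decomposition D : lie_derivation d D ->
  exists u, lie_derivation d (D \- br u) /\
    forall a i, exists c, (D \- br u) (m a i) = c *: m a i.
Proof.
move=> Dder; have [u [S1 Sx]] := lie_derivation_normalize Dder.
have Sder := lie_derivationB Dder (lie_derivation_ad derM u).
by exists u; split; last exact: lie_derivation_scalar.
Qed.
End WittTypeAlgebra.

Section MalgLinear.
Variables (K : choiceType) (R : ringType) (V : lmodType R).
Implicit Types (g : {malg R[K]}) (k : K).

Lemma malgU_scale (c : R) k : << c *g k >> = c *: (<< k >> : {malg R[K]}).
Proof. by apply/malgP => l; rewrite mcoeffZ !mcoeffU mulr_natr. Qed.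

Lemma mcoeff_combU (x y : R) k l n :
  (x *: << k >> + y *: << l >> : {malg R[K]})@_n
  = x * (k == n)%:R + y * (l == n)%:R.
Proof. by rewrite mcoeffD !mcoeffZ !mcoeffU. Qed.

Section LinearExpansion.
Variables (f : {malg R[K]} -> V) (f_linear : linear f).
HB.instance Definition _ :=
  GRing.isLinear.Build R {malg R[K]} V *:%R f f_linear.

Lemma linear_malgE g : f g = \sum_(k <- msupp g) g@_k *: f << k >>.
Proof.
rewrite {1}(monalgE g) linear_sum.
by apply: eq_bigr => k _; rewrite malgU_scale linearZ.
Qed.
End LinearExpansion.

Lemma linear_malg_eq (f1 f2 : {malg R[K]} -> V) : linear f1 -> linear f2 ->
  (forall k, f1 << k >> = f2 << k >>) -> f1 =1 f2.
Proof.
move=> lin1 lin2 eq12 g; rewrite (linear_malgE lin1) (linear_malgE lin2).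
by apply: eq_bigr => k _; rewrite eq12.
Qed.

Definition malg_ext (phi : K -> V) g : V := \sum_(k <- msupp g) g@_k *: phi k.

Lemma malg_extEw (phi : K -> V) g (dom : {fset K}) : (msupp g `<=` dom)%fset ->
  malg_ext phi g = \sum_(k <- dom) g@_k *: phi k.
Proof.
move=> le; rewrite /malg_ext (big_fset_incl _ le) // => k _ /mcoeff_outdom ->.
exact: scale0r.
Qed.

Lemma malg_ext_linear (phi : K -> V) : linear (malg_ext phi).
Proof.
move=> c g h; pose dom := (msupp g `|` msupp h `|` msupp (c *: g + h))%fset.
rewrite !(@malg_extEw _ _ dom);
  try by apply/fsubsetP => k kin; rewrite !inE kin ?orbT.
rewrite scaler_sumr -big_split; apply: eq_bigr => k _.
by rewrite mcoeffD mcoeffZ scalerDl scalerA.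
Qed.

Lemma malg_extU (phi : K -> V) k : malg_ext phi << k >> = phi k.
Proof. by rewrite (malg_extEw _ msuppU_le) big_seq_fset1 mcoeffUU scale1r. Qed.
End MalgLinear.

Section Walgebra.
Variable F : fieldType.
Local Notation W := (Wstar F).
Implicit Types (f g h : W) (k l : W_index).

Lemma WmulEl f g : Wmul f g =
  malg_ext (fun k => malg_ext (fun l => << (k.1 + l.1, (k.2 + l.2)%N) >>) g) f.
Proof.
apply: eq_bigr => k _; rewrite scaler_sumr.
by apply: eq_bigr => l _; rewrite scalerA.
Qed.

Lemma WmulEr f g : Wmul f g =
  malg_ext (fun l => malg_ext (fun k => << (k.1 + l.1, (k.2 + l.2)%N) >>) f) g.
Proof.
rewrite /Wmul exchange_big; apply: eq_bigr => l _; rewrite scaler_sumr.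
by apply: eq_bigr => k _; rewrite scalerA mulrC.
Qed.

Lemma Wmul_linear_l g : linear (fun f => Wmul f g).
Proof. by move=> c f1 f2; rewrite !WmulEl malg_ext_linear. Qed.

Lemma Wmul_linear_r f : linear (Wmul f).
Proof. by move=> c g1 g2; rewrite !WmulEr malg_ext_linear. Qed.

Lemma WmulUU k l : Wmul << k >> << l >> = << (k.1 + l.1, (k.2 + l.2)%N) >> :> W.
Proof. by rewrite WmulEl !malg_extU. Qed.

Lemma WmulC f g : Wmul f g = Wmul g f.
Proof.
move: f; apply: linear_malg_eq => [||k]; first exact: Wmul_linear_l.
  exact: Wmul_linear_r.
move: g; apply: linear_malg_eq => [||l]; first exact: Wmul_linear_r.
  exact: Wmul_linear_l.
by rewrite !WmulUU addrC addnC.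
Qed.

Lemma WmulA f g h : Wmul f (Wmul g h) = Wmul (Wmul f g) h.
Proof.
move: f; apply: linear_malg_eq => [c f1 f2|c f1 f2|k].
- by rewrite Wmul_linear_l.
- by rewrite !Wmul_linear_l.
move: g; apply: linear_malg_eq => [c g1 g2|c g1 g2|l].
- by rewrite Wmul_linear_l Wmul_linear_r.
- by rewrite Wmul_linear_r Wmul_linear_l.
move: h; apply: linear_malg_eq => [c h1 h2|c h1 h2|n].
- by rewrite !Wmul_linear_r.
- by rewrite !Wmul_linear_r.
by rewrite !WmulUU /= addrA addnA.
Qed.

Lemma Wmul1 f : Wmul << ((0 : int), 0%N) >> f = f.
Proof.
move: f; apply: linear_malg_eq => [c f1 f2|//|[a i]].
  by rewrite Wmul_linear_r.
by rewrite WmulUU /= add0r.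
Qed.

Lemma WmulDl f g h : Wmul (f + g) h = Wmul f h + Wmul g h.
Proof. exact: (GRing.semilinear_linear (Wmul_linear_l h)).2. Qed.

Lemma WmulZl (c : F) f g : Wmul (c *: f) g = c *: Wmul f g.
Proof. exact: (GRing.semilinear_linear (Wmul_linear_l g)).1. Qed.

Lemma Wone_neq0 : << ((0 : int), 0%N) >> != 0 :> W.
Proof. by rewrite monalgU_eq0 oner_eq0. Qed.
End Walgebra.

(* monalg only multiplies over monoids whose sole unit is the identity, and
   Z x N has more units, so the algebra structure is put on an alias. *)
Definition Walg (F : fieldType) : Type := Wstar F.
HB.instance Definition _ (F : fieldType) := GRing.Lmodule.on (Walg F).
HB.instance Definition _ (F : fieldType) :=
  GRing.Zmodule_isComNzRing.Build (Walg F) (@WmulA F) (@WmulC F) (@Wmul1 F)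
    (@WmulDl F) (@Wone_neq0 F).
HB.instance Definition _ (F : fieldType) :=
  GRing.Lmodule_isLalgebra.Build F (Walg F)
    (fun c f g => esym (@WmulZl F c f g)).
HB.instance Definition _ (F : fieldType) :=
  GRing.Lalgebra_isComAlgebra.Build F (Walg F).

Section Wderivation.
Variable F : fieldType.
Local Notation W := (Wstar F).
Local Notation E := (ebasis F).

Lemma WderE (f : W) : Wder f =
  malg_ext (fun k => k.1%:~R *: << k >> + k.2%:R *: << (k.1, k.2.-1) >>) f.
Proof. by []. Qed.

Lemma Wder_linear : linear (@Wder F).
Proof. by move=> c f g; rewrite !WderE malg_ext_linear. Qed.

Lemma Wder_ebasis a i : Wder (E a i) = a%:~R *: E a i + i%:R *: E a i.-1.
Proof. by rewrite WderE malg_extU. Qed.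

Lemma ebasis00 : E 0 0 = 1 :> Walg F.
Proof. by []. Qed.

Lemma ebasisM a i b j : (E a i : Walg F) * E b j = E (a + b) (i + j).
Proof. exact: WmulUU. Qed.

Lemma ebasis_ind (P : Walg F -> Prop) : P 0 ->
  (forall c a i x, P x -> P (c *: E a i + x)) -> forall x, P x.
Proof.
move=> P0 PS x; rewrite (monalgE x).
elim: (msupp x : seq _) => [|[a i] s IHs]; first by rewrite big_nil.
by rewrite big_cons malgU_scale; apply: PS.
Qed.

Lemma mcoeff_Wder (z : W) c j :
  (Wder z)@_(c, j) = c%:~R * z@_(c, j) + j.+1%:R * z@_(c, j.+1).
Proof.
pose lhs (z : W) : F^o := (Wder z)@_(c, j).
pose rhs (z : W) : F^o := c%:~R * z@_(c, j) + j.+1%:R * z@_(c, j.+1).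
apply: (@linear_malg_eq _ _ _ lhs rhs) => [a x y|a x y|[b i]].
- by rewrite /lhs Wder_linear mcoeffD mcoeffZ.
- by rewrite /rhs !mcoeffD !mcoeffZ /GRing.scale /=; ring.
rewrite /lhs /rhs WderE malg_extU mcoeff_combU !mcoeffU !xpair_eqE.
have [<- | /negbTE bc] := eqVneq b c; last by rewrite !andFb !mulr0 addr0.
case: i => [|i]; rewrite /= ?mul0r ?mulr0 ?addr0 ?eqSS //.
by have [->|_] := eqVneq i j; rewrite ?mulr0.
Qed.

Lemma mcoeff_gt_max_eq0 (z : W) c j :
  (\max_(k <- msupp z) k.2 < j)%N -> z@_(c, j) = 0.
Proof.
move=> lt_max; apply/eqP; apply: contraTT lt_max.
rewrite mcoeff_neq0 -leqNgt => zcj.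
exact: (@leq_bigmax_seq _ _ xpredT (fun k : W_index => k.2) (c, j) zcj).
Qed.

Hypothesis charF0 : [pchar F] =i pred0.

(* The coefficients of an eigenvector z satisfy
   (c - b) z_{c,j} + (j + 1) z_{c,j+1} = 0: off the line c = b a nonzero
   coefficient would propagate to all larger j, against finiteness of the
   support. *)
Lemma Wder_eigen (b : int) (z : W) :
  Wder z = b%:~R *: z -> exists c, z = c *: E b 0.
Proof.
move=> dz.
have coef_rec c j : (c%:~R - b%:~R) * z@_(c, j) + j.+1%:R * z@_(c, j.+1) = 0.
  by rewrite mulrBl addrAC -mcoeff_Wder dz mcoeffZ subrr.
have zb j : z@_(b, j.+1) = 0.
  have := coef_rec b j; rewrite subrr mul0r add0r => /eqP.
  by rewrite mulf_eq0 (negbTE (pchar0_natrS_neq0 charF0 j)) => /eqP.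
have zc c j : c != b -> z@_(c, j) = 0.
  move=> cb; pose N := (\max_(k <- msupp z) k.2).+1.
  suff zc_above n : forall j' : nat, (N - j' <= n)%N -> z@_(c, j') = 0.
    exact: (zc_above _ j).
  elim: n => [|n IHn] j' le_j.
    by apply: mcoeff_gt_max_eq0; rewrite leqn0 subn_eq0 in le_j.
  have := coef_rec c j'; rewrite (IHn j'.+1) ?mulr0 ?addr0; last by lia.
  move=> /eqP; rewrite mulf_eq0 -intrB (pchar0_intr_eq0 charF0) subr_eq0.
  by rewrite (negbTE cb) => /eqP.
exists z@_(b, 0%N); apply/malgP => -[c j]; rewrite mcoeffZ mcoeffU xpair_eqE.
have [<- | cb] := eqVneq b c; last by rewrite zc 1?eq_sym // mulr0.
by case: j => [|j]; rewrite ?mulr1 // zb mulr0.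
Qed.
End Wderivation.

HB.instance Definition _ (F : fieldType) :=
  GRing.isLinear.Build F (Walg F) (Walg F) *:%R (@Wder F) (@Wder_linear F).

Theorem theorem2 (F : fieldType) (charF0 : [pchar F] =i pred0)
    (D : Wstar F -> Wstar F) (hD : is_derivation D) :
  exists (u : Wstar F) (S : Wstar F -> Wstar F),
    is_scalar_derivation S /\ forall x : Wstar F, D x = ad u x + S x.
Proof.
have [u [Sder Sscalar]] :=
  @lie_derivation_decomposition F (Walg F) (@Wder F) (ebasis F) (ebasis00 F)
    (@ebasisM F) (@Wder_ebasis F) (@ebasis_ind F) charF0 (Wder_eigen charF0)
    D hD.
exists u, (D \- ad u); split; first by split.
by move=> x; rewrite /= addrC subrK.
Qed.
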